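(* Let $0<a_1<a_2<\cdots<a_n$ be task lengths, $A_i:=a_1+\cdots+a_i$, and for a permutation $\pi$ of $\{1,\dots,n\}$, $A_{\pi(i)}:=a_{\pi(1)}+\cdots+a_{\pi(i)}$. Let $\lambda(t)\ge0$ be the intensity of the disruption process and $p(t):=\lambda(t)e^{-\int_0^t\lambda(u)\,du}$. In the single-failure model, for every permutation $\pi$, $$R_{1:n}(0)-R_{\pi(1):\pi(n)}(0)=\sum_{i=1}^n\left(a_i\int_0^{A_i}p(s)\,ds-a_{\pi(i)}\int_0^{A_{\pi(i)}}p(s)\,ds\right).$$ Moreover: (i) if $p$ is strictly decreasing on $[0,A_n]$, then SPT is optimal, i.e. $R_{1:n}(0)<R_{\pi(1):\pi(n)}(0)$ for every $\pi\neq\mathrm{id}$; (ii) if $p$ is strictly increasing on $[0,A_n]$, then LPT is optimal, i.e. $R_{n:1}(0)<R_{\pi(1):\pi(n)}(0)$ for every $\pi$ with $(\pi(1),\dots,\pi(n))\ne(n,n-1,\dots,1)$.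
   Context: Single-failure model: a single machine processes tasks of lengths $a_{\pi(1)},\dots,a_{\pi(n)}$ in this order starting at time $0$; a task of length $c$ needs $c$ units of uninterrupted processing. At most one disruption occurs: its time $D$ is the first point of a non-homogeneous Poisson process with intensity $\lambda$ (so $D$ has density $p$ on $[0,\infty)$, and possibly $D=\infty$). If $D\ge A_{\pi(n)}$ the batch finishes at time $T=A_{\pi(n)}$; if $A_{\pi(i-1)}\le D<A_{\pi(i)}$ (with $A_{\pi(0)}=0$), the task $a_{\pi(i)}$ in progress is restarted from scratch at time $D$ and it and all remaining tasks are then processed without further disruption, so $T=D+a_{\pi(i)}+\cdots+a_{\pi(n)}$. $R_{\pi(1):\pi(n)}(0):=\mathbb E[T]$; $R_{1:n}$ is the identity order (SPT, increasing lengths) and $R_{n:1}$ the order $a_n,\dots,a_1$ (LPT, decreasing lengths). *)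

From Stdlib Require Import Reals Lra List Permutation.
From Coquelicot Require Import Coquelicot.
Open Scope R_scope.

Definition sumR (l : list R) : R := fold_right Rplus 0 l.

(* Tasks are indexed 0..n-1 (paper: 1..n); a processing order is a list
   [pi(1); ...; pi(n)] of task indices which is a permutation of [0..n-1]. *)

(* Completion time T of the batch with task lengths [cs] (in processing
   order), the batch (re)starting at time [start], when the (single)
   disruption occurs at time D >= start:
   - the first task c whose processing interval [start', start'+c) contains D
     is restarted at D and it and all remaining tasks are processed without
     further disruption: T = D + c + (sum of remaining lengths);
   - if D is at or after the end of the last task, T = start + total. *)
Fixpoint completion (cs : list R) (start D : R) : R :=
  match cs with
  | nil => start
  | c :: r => if Rlt_dec D (start + c) then D + c + sumR r
              else completion r (start + c) D
  end.

Definition Lam (lam : R -> R) (t : R) : R := RInt lam 0 t.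

(* Density of the first point D of the NHPP: p(t) = lambda(t) e^{-Lambda(t)}. *)
Definition dens (lam : R -> R) (t : R) : R := lam t * exp (- Lam lam t).

Definition lens (a : nat -> R) (l : list nat) : list R := map a l.

Definition Apref (a : nat -> R) (l : list nat) (k : nat) : R :=
  sumR (firstn k (lens a l)).

(* R_{pi(1):pi(n)}(0) = E[T], where D has density p on [0, oo) and
   P(D >= t) = e^{-Lambda(t)} (possibly D = oo). Since T = A_{pi(n)} whenever
   D >= A_{pi(n)}:
   E[T] = int_0^{A_{pi(n)}} T(s) p(s) ds + A_{pi(n)} * P(D >= A_{pi(n)}). *)
Definition ET (a : nat -> R) (lam : R -> R) (l : list nat) : R :=
  let An := sumR (lens a l) in
  RInt (fun s => completion (lens a l) 0 s * dens lam s) 0 An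
  + An * exp (- Lam lam An).

From Stdlib Require Import Reals Lra Lia List Permutation Sorting.
From Coquelicot Require Import Coquelicot.
Open Scope R_scope.

(** A disruption at time s during the i-th task of an order ends the batch at
    s + (A_n - A_(i-1)).  Writing F t = ∫_0^t p, summation by parts therefore gives
    E[T] = ∫_0^(A_n) s p(s) ds + A_n e^(-Λ(A_n)) + Σ_i a_π(i) F(A_π(i)),
    whose first two terms do not depend on the order.
    Exchanging adjacent tasks of lengths x > y started at time B lowers the last sum by
    y ∫_(B+y)^(B+x) p - (x - y) ∫_(B+x)^(B+x+y) p.  When p decreases strictly, the first
    integral exceeds (x - y) p(B+x) and the second is at most y p(B+x), so this is positive;
    when p increases strictly, the same holds with x and y exchanged (apply it to -p).
    By induction on the number of tasks, an unsorted order is beaten by moving the first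
    task of the sorted order to the second position (induction) and then to the first
    (exchange).  Riemann integrability of p = λ e^(-Λ) holds because e^(-Λ) is Lipschitz. *)

Lemma sumR_ge0 (l : list R) : (forall c, In c l -> 0 <= c) -> 0 <= sumR l.
Proof.
  induction l as [|c l IH]; intros H; simpl; [lra|].
  assert (0 <= c) by (apply H; left; reflexivity).
  assert (0 <= sumR l) by (apply IH; intros; apply H; right; assumption).
  unfold sumR in *; lra.
Qed.

Lemma sumR_perm (l1 l2 : list R) : Permutation l1 l2 -> sumR l1 = sumR l2.
Proof. induction 1; simpl in *; lra. Qed.

Lemma sumR_map_minus {A : Type} (f g : A -> R) (s : list A) :
  sumR (map f s) - sumR (map g s) = sumR (map (fun k => f k - g k) s).
Proof. induction s as [|x s IH]; simpl in *; lra. Qed.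

Lemma Permutation_cons_neq {A : Type} (x y : A) (r s : list A) :
  x <> y -> Permutation (x :: r) (y :: s) ->
  exists l1 l2, s = l1 ++ x :: l2 /\ Permutation r (y :: l1 ++ l2).
Proof.
  intros Hxy Hperm.
  assert (Hin : In x s).
  { destruct (Permutation_in x Hperm (or_introl eq_refl)) as [E|]; [congruence|assumption]. }
  destruct (in_split _ _ Hin) as [l1 [l2 ->]].
  exists l1, l2. split; [reflexivity|].
  exact (Permutation_cons_app_inv (y :: l1) l2 Hperm).
Qed.

Lemma StronglySorted_remove {A : Type} (ord : A -> A -> Prop) (l1 l2 : list A) (x : A) :
  StronglySorted ord (l1 ++ x :: l2) -> StronglySorted ord (l1 ++ l2).
Proof.
  induction l1 as [|y l1 IH]; simpl; intros H.
  - apply StronglySorted_inv in H. tauto.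
  - apply StronglySorted_inv in H as [H1 H2]. constructor; [auto|].
    rewrite Forall_forall in *. intros z Hz. apply H2.
    apply in_app_or in Hz. apply in_or_app. simpl. tauto.
Qed.

Lemma map_eq_inj_in {A B : Type} (f : A -> B) (l1 l2 : list A) :
  (forall x y, In x l1 -> In y l2 -> f x = f y -> x = y) -> map f l1 = map f l2 -> l1 = l2.
Proof.
  revert l2; induction l1 as [|x l1 IH]; intros [|y l2] Hinj E; try discriminate; [reflexivity|].
  injection E as E1 E2. f_equal.
  - apply Hinj; [left|left|]; auto.
  - apply IH; [|exact E2]. intros; apply Hinj; [right|right|]; auto.
Qed.

Lemma ex_RInt_subinterval (f : R -> R) a b c d :
  a <= c -> c <= d -> d <= b -> ex_RInt f a b -> ex_RInt f c d.
Proof.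
  intros Hac Hcd Hdb Hf.
  apply (ex_RInt_Chasles_2 f a c d); [lra|].
  apply (ex_RInt_Chasles_1 f a d b); [lra|exact Hf].
Qed.

Lemma RInt_Chasles_sub (f : R -> R) a u v :
  a <= u -> u <= v -> ex_RInt f a v -> RInt f u v = RInt f a v - RInt f a u.
Proof.
  intros Hau Huv Hf.
  assert (E := RInt_Chasles f a u v
    (ex_RInt_subinterval f a v a u ltac:(lra) ltac:(lra) ltac:(lra) Hf)
    (ex_RInt_subinterval f a v u v ltac:(lra) ltac:(lra) ltac:(lra) Hf)).
  change (RInt f a u + RInt f u v = RInt f a v) in E.
  lra.
Qed.

Lemma is_RInt_Chasles_R (f : R -> R) a b c I1 I2 I :
  is_RInt f a b I1 -> is_RInt f b c I2 -> I = I1 + I2 -> is_RInt f a c I.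
Proof. intros H1 H2 ->. exact (is_RInt_Chasles f a b c I1 I2 H1 H2). Qed.

Lemma RInt_ge_const (f : R -> R) a b c :
  a <= b -> ex_RInt f a b -> (forall x, a < x < b -> c <= f x) -> (b - a) * c <= RInt f a b.
Proof.
  intros Hab Hf Hc.
  replace ((b - a) * c) with (RInt (fun _ => c) a b) by (rewrite RInt_const; reflexivity).
  apply RInt_le; auto using ex_RInt_const.
Qed.

Lemma RInt_le_const (f : R -> R) a b c :
  a <= b -> ex_RInt f a b -> (forall x, a < x < b -> f x <= c) -> RInt f a b <= (b - a) * c.
Proof.
  intros Hab Hf Hc.
  replace ((b - a) * c) with (RInt (fun _ => c) a b) by (rewrite RInt_const; reflexivity).
  apply RInt_le; auto using ex_RInt_const.
Qed.

Definition lipschitz_on (g : R -> R) (a b L : R) : Prop :=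
  forall x y, a <= x <= b -> a <= y <= b -> Rabs (g x - g y) <= L * Rabs (x - y).

Lemma ex_RInt_uniform_limit (f : R -> R) (phi : nat -> R -> R) (a b : R) :
  a <= b -> (forall N, ex_RInt (phi N) a b) ->
  (forall eps : posreal, exists N0, forall N x,
     (N0 <= N)%nat -> a <= x <= b -> Rabs (phi N x - f x) < eps) ->
  ex_RInt f a b.
Proof.
  intros Hab Hphi Hcv.
  (* [filterlim_RInt] asks for uniform convergence on all of [R]: cut off outside [a, b]. *)
  set (cut := fun (h : R -> R) x => if Rle_dec a x then if Rle_dec x b then h x else 0 else 0).
  assert (Hcut : forall h x, Rmin a b < x < Rmax a b -> cut h x = h x).
  { intros h x Hx. rewrite Rmin_left, Rmax_right in Hx by lra. unfold cut.
    destruct (Rle_dec a x); [|lra]. destruct (Rle_dec x b); [reflexivity|lra]. }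
  destruct (filterlim_RInt (fun N => cut (phi N)) a b eventually eventually_filter (cut f)
              (fun N => RInt (cut (phi N)) a b)) as [If [_ HIf]].
  - intros N. apply RInt_correct, (ex_RInt_ext (phi N)); [|apply Hphi].
    intros x Hx. symmetry. apply Hcut, Hx.
  - intros P [eps HP]. destruct (Hcv eps) as [N0 HN0].
    exists N0. intros N HN. apply HP. intros x.
    change (Rabs (cut (phi N) x - cut f x) < eps). unfold cut.
    destruct (Rle_dec a x); [destruct (Rle_dec x b)|]; [apply HN0; auto; lra| |];
      rewrite Rminus_0_r, Rabs_R0; apply cond_pos.
  - exists If. apply (is_RInt_ext (cut f)); [apply Hcut|exact HIf].
Qed.

Definition grid_left (a h x : R) : R := a + h * IZR (Zfloor ((x - a) / h)).

Lemma grid_left_bounds a h x :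
  0 < h -> a <= x -> a <= grid_left a h x <= x /\ x < grid_left a h x + h.
Proof.
  intros Hh Hx. unfold grid_left.
  set (q := (x - a) / h).
  assert (Eq : x = a + h * q) by (unfold q; field; lra).
  destruct (Zfloor_bound q) as [F1 F2].
  assert (F0 : 0 <= IZR (Zfloor q)).
  { apply IZR_le, Zfloor_lub. unfold q. apply Rdiv_le_0_compat; lra. }
  assert (0 <= h * IZR (Zfloor q)) by (apply Rmult_le_pos; lra).
  assert (h * IZR (Zfloor q) <= h * q) by (apply Rmult_le_compat_l; lra).
  assert (h * q < h * (IZR (Zfloor q) + 1)) by (apply Rmult_lt_compat_l; lra).
  lra.
Qed.

Lemma grid_left_eq a h x (k : nat) :
  0 < h -> a + INR k * h <= x < a + INR (S k) * h -> grid_left a h x = a + INR k * h.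
Proof.
  intros Hh Hx. rewrite S_INR in Hx. unfold grid_left.
  rewrite (Zfloor_eq (Z.of_nat k)), <- INR_IZR_INZ; [ring|].
  rewrite <- INR_IZR_INZ. split.
  - apply Rle_div_r; lra.
  - apply Rlt_div_l; lra.
Qed.

Lemma ex_RInt_mul_grid (f g : R -> R) a h (k : nat) :
  0 < h -> ex_RInt f a (a + INR k * h) ->
  ex_RInt (fun x => f x * g (grid_left a h x)) a (a + INR k * h).
Proof.
  intros Hh. induction k as [|k IH]; intros Hf.
  - replace (a + INR 0 * h) with a by (simpl; ring). apply ex_RInt_point.
  - assert (Hk0 : 0 <= INR k * h) by (apply Rmult_le_pos; [apply pos_INR|lra]).
    assert (Hk : a + INR k * h <= a + INR (S k) * h) by (rewrite S_INR; lra).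
    assert (Hf' : forall c d, a <= c -> c <= d -> d <= a + INR (S k) * h -> ex_RInt f c d).
    { intros c d Hc Hcd Hd. exact (ex_RInt_subinterval f a _ c d Hc Hcd Hd Hf). }
    apply (ex_RInt_Chasles _ _ (a + INR k * h)).
    + apply IH, Hf'; lra.
    + apply (ex_RInt_ext (fun x => scal (g (a + INR k * h)) (f x))).
      * intros x Hx. rewrite Rmin_left, Rmax_right in Hx by lra.
        rewrite (grid_left_eq a h x k) by lra.
        change (g (a + INR k * h) * f x = f x * g (a + INR k * h)). ring.
      * apply (@ex_RInt_scal R_NormedModule), Hf'; lra.
Qed.

Lemma div_INR_S_eventually_lt (C : R) (eps : posreal) :
  exists N0, forall N, (N0 <= N)%nat -> C / INR (S N) < eps.
Proof.
  destruct (INR_unbounded (C / eps)) as [N0 HN0].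
  exists N0. intros N HN.
  assert (HS : INR (S N) > 0) by (apply lt_0_INR; lia).
  assert (C < INR N0 * eps) by (apply Rlt_div_l; [apply cond_pos|exact HN0]).
  assert (INR N0 * eps <= INR (S N) * eps).
  { apply Rmult_le_compat_r; [left; apply cond_pos|apply le_INR; lia]. }
  apply Rlt_div_l; lra.
Qed.

Lemma ex_RInt_mul_lipschitz (f g : R -> R) a b L :
  a <= b -> 0 <= L -> ex_RInt f a b -> lipschitz_on g a b L ->
  ex_RInt (fun x => f x * g x) a b.
Proof.
  intros Hab HL Hf Hg.
  destruct (Req_dec a b) as [<-|Hne]; [apply ex_RInt_point|].
  destruct (ex_RInt_ub f a b Hf) as [M HM].
  rewrite Rmin_left, Rmax_right in HM by lra.
  assert (HM0 : 0 <= M) by (apply Rle_trans with (Rabs (f a)); [apply Rabs_pos|apply HM; lra]).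
  set (h := fun N : nat => (b - a) / INR (S N)).
  assert (Hh : forall N, 0 < h N).
  { intros N. apply Rdiv_lt_0_compat; [lra|apply lt_0_INR; lia]. }
  assert (Hend : forall N, a + INR (S N) * h N = b).
  { intros N. unfold h. field. apply not_0_INR. lia. }
  apply (ex_RInt_uniform_limit _ (fun N x => f x * g (grid_left a (h N) x))); [lra| |].
  - intros N. rewrite <- (Hend N). apply ex_RInt_mul_grid; [apply Hh|rewrite Hend; exact Hf].
  - intros eps.
    destruct (div_INR_S_eventually_lt (M * L * (b - a)) eps) as [N0 HN0].
    exists N0. intros N x HN Hx.
    destruct (grid_left_bounds a (h N) x (Hh N) ltac:(lra)) as [G1 G2].
    assert (Herr : Rabs (f x * g (grid_left a (h N) x) - f x * g x) <= M * (L * h N)).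
    { rewrite <- Rmult_minus_distr_l, Rabs_mult.
      apply Rmult_le_compat; try apply Rabs_pos; [apply HM; lra|].
      apply Rle_trans with (L * Rabs (grid_left a (h N) x - x)); [apply Hg; lra|].
      apply Rmult_le_compat_l; [lra|]. rewrite Rabs_left1; lra. }
    replace (M * (L * h N)) with (M * L * (b - a) / INR (S N)) in Herr
      by (unfold h; field; apply not_0_INR; lia).
    specialize (HN0 N HN). lra.
Qed.

Lemma lipschitz_on_RInt (f : R -> R) a b M :
  ex_RInt f a b -> (forall t, a <= t <= b -> Rabs (f t) <= M) ->
  lipschitz_on (fun t => RInt f a t) a b M.
Proof.
  intros Hf HM.
  assert (W : forall x y, a <= y -> y <= x -> x <= b ->
            Rabs (RInt f a x - RInt f a y) <= M * Rabs (x - y)).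
  { intros x y Hy Hyx Hx.
    assert (Hax : ex_RInt f a x) by (apply (ex_RInt_subinterval f a b); lra || assumption).
    assert (Hyx' : ex_RInt f y x) by (apply (ex_RInt_subinterval f a x); lra || assumption).
    rewrite <- (RInt_Chasles_sub f a y x Hy Hyx Hax), (Rabs_right (x - y)), Rmult_comm by lra.
    apply abs_RInt_le_const; [lra|exact Hyx'|intros; apply HM; lra]. }
  intros x y Hx Hy. destruct (Rle_dec y x); [apply W; lra|].
  rewrite Rabs_minus_sym, (Rabs_minus_sym x). apply W; lra.
Qed.

Lemma exp_opp_lipschitz u v : 0 <= u -> 0 <= v -> Rabs (exp (- u) - exp (- v)) <= Rabs (u - v).
Proof.
  assert (Hle1 : forall z, 0 <= z -> exp (- z) <= 1).
  { intros z Hz. rewrite <- exp_0. destruct (Req_dec z 0) as [->|Hz0].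
    - rewrite Ropp_0. apply Rle_refl.
    - left. apply exp_increasing. lra. }
  assert (W : forall x y, 0 <= x -> x <= y -> Rabs (exp (- x) - exp (- y)) <= Rabs (x - y)).
  { intros x y Hx Hxy.
    assert (E : exp (- y) = exp (- x) * exp (- (y - x))) by (rewrite <- exp_plus; f_equal; ring).
    assert (E1 := Hle1 x Hx).
    assert (E2 := Hle1 (y - x) ltac:(lra)).
    assert (E3 := exp_ineq1_le (- (y - x))).
    assert (E4 := exp_pos (- x)).
    rewrite E, Rabs_right, (Rabs_left1 (x - y)) by nra. nra. }
  intros Hu Hv. destruct (Rle_dec u v); [apply W; auto|].
  rewrite Rabs_minus_sym, (Rabs_minus_sym u). apply W; lra.
Qed.

Section Density.

Variable lam : R -> R.
Hypothesis lam_ge0 : forall t, 0 <= t -> 0 <= lam t.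
Hypothesis lam_int : forall t, 0 <= t -> ex_RInt lam 0 t.

Lemma ex_RInt_dens T : 0 <= T -> ex_RInt (dens lam) 0 T.
Proof.
  intros HT.
  destruct (ex_RInt_ub lam 0 T (lam_int T HT)) as [M HM].
  rewrite Rmin_left, Rmax_right in HM by lra.
  assert (HM0 : 0 <= M) by (apply Rle_trans with (Rabs (lam 0)); [apply Rabs_pos|apply HM; lra]).
  apply (ex_RInt_mul_lipschitz lam (fun t => exp (- Lam lam t)) 0 T M HT HM0 (lam_int T HT)).
  intros x y Hx Hy.
  assert (Lam_ge0 : forall t, 0 <= t -> 0 <= Lam lam t).
  { intros t Ht. apply RInt_ge_0; auto. intros; apply lam_ge0; lra. }
  apply Rle_trans with (Rabs (Lam lam x - Lam lam y)).
  - apply exp_opp_lipschitz; apply Lam_ge0; lra.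
  - apply (lipschitz_on_RInt lam 0 T M (lam_int T HT) HM); assumption.
Qed.

Lemma ex_RInt_mul_id_dens T : 0 <= T -> ex_RInt (fun s => s * dens lam s) 0 T.
Proof.
  intros HT. apply (ex_RInt_ext (fun s => dens lam s * s)).
  - intros x _. apply Rmult_comm.
  - apply (ex_RInt_mul_lipschitz _ _ 0 T 1); [lra|lra|apply ex_RInt_dens, HT|].
    intros x y _ _. lra.
Qed.

End Density.

(* weighted_cdf p [c_1; ...; c_k] t = Σ_i c_i F(t + c_1 + ... + c_i) with F = ∫_0^· p; for the
   lengths of an order and t = 0 this is the paper's Σ_i a_π(i) ∫_0^(A_π(i)) p. *)
Fixpoint weighted_cdf (p : R -> R) (cs : list R) (t : R) : R :=
  match cs with
  | nil => 0
  | c :: r => c * RInt p 0 (t + c) + weighted_cdf p r (t + c)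
  end.

Lemma weighted_cdf_nth (p : R -> R) (cs : list R) (t : R) :
  weighted_cdf p cs t
  = sumR (map (fun k => nth k cs 0 * RInt p 0 (t + sumR (firstn (S k) cs))) (seq 0 (length cs))).
Proof.
  revert t. induction cs as [|c r IH]; intros t; [reflexivity|].
  simpl length. rewrite <- cons_seq, <- seq_shift, map_cons, map_map. simpl. rewrite IH.
  f_equal; [rewrite Rplus_0_r; reflexivity|].
  f_equal. apply map_ext. intros k. simpl. rewrite Rplus_assoc. reflexivity.
Qed.

Lemma weighted_cdf_lens (p : R -> R) (a : nat -> R) (l : list nat) :
  weighted_cdf p (lens a l) 0
  = sumR (map (fun k => a (nth k l 0%nat) * RInt p 0 (Apref a l (S k))) (seq 0 (length l))).
Proof.
  rewrite weighted_cdf_nth. unfold lens. rewrite length_map.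
  f_equal. apply map_ext_in. intros k Hk. apply in_seq in Hk.
  rewrite Rplus_0_l, (nth_indep _ 0 (a 0%nat)), map_nth by (rewrite length_map; lia).
  reflexivity.
Qed.

Section CompletionIntegral.

Variables (p : R -> R) (Tot : R).
Hypothesis p_int : ex_RInt p 0 Tot.
Hypothesis id_p_int : ex_RInt (fun s => s * p s) 0 Tot.

Lemma is_RInt_completion (cs : list R) (t : R) :
  (forall c, In c cs -> 0 <= c) -> 0 <= t -> t + sumR cs <= Tot ->
  is_RInt (fun s => completion cs t s * p s) t (t + sumR cs)
    (RInt (fun s => s * p s) t (t + sumR cs) + weighted_cdf p cs t - sumR cs * RInt p 0 t).
Proof.
  revert t. induction cs as [|c r IH]; intros t Hcs Ht Htot.
  - simpl. rewrite Rplus_0_r.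
    replace (RInt (fun s => s * p s) t t + 0 - 0 * RInt p 0 t) with 0.
    + apply (@is_RInt_point R_NormedModule).
    + rewrite RInt_point. unfold zero; simpl; ring.
  - simpl in Htot |- *.
    assert (Hc : 0 <= c) by (apply Hcs; left; reflexivity).
    assert (Hr : forall c', In c' r -> 0 <= c') by (intros; apply Hcs; right; assumption).
    assert (Sr := sumR_ge0 r Hr).
    assert (Hsub : forall (g : R -> R) u v,
              ex_RInt g 0 Tot -> 0 <= u -> u <= v -> v <= Tot -> ex_RInt g u v).
    { intros g u v Hg Hu Huv Hv. exact (ex_RInt_subinterval g 0 Tot u v Hu Huv Hv Hg). }
    assert (Hhead : is_RInt (fun s => completion (c :: r) t s * p s) t (t + c)
              (RInt (fun s => s * p s) t (t + c) + (c + sumR r) * RInt p t (t + c))).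
    { apply (is_RInt_ext (fun s => plus (s * p s) (scal (c + sumR r) (p s)))).
      - intros x Hx. rewrite Rmin_left, Rmax_right in Hx by lra. simpl.
        destruct (Rlt_dec x (t + c)); [|lra].
        change (x * p x + (c + sumR r) * p x = (x + c + sumR r) * p x). ring.
      - apply (@is_RInt_plus R_NormedModule); [|apply (@is_RInt_scal R_NormedModule)];
          apply (RInt_correct (V := R_CompleteNormedModule)), Hsub; auto; lra. }
    assert (Htail : is_RInt (fun s => completion (c :: r) t s * p s) (t + c) (t + c + sumR r)
              (RInt (fun s => s * p s) (t + c) (t + c + sumR r) + weighted_cdf p r (t + c)
               - sumR r * RInt p 0 (t + c))).
    { apply (is_RInt_ext (fun s => completion r (t + c) s * p s)); [|apply IH; auto; lra].
      intros x Hx. rewrite Rmin_left, Rmax_right in Hx by lra. simpl.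
      destruct (Rlt_dec x (t + c)); [lra|reflexivity]. }
    replace (t + (c + sumR r)) with (t + c + sumR r) by ring.
    apply (is_RInt_Chasles_R _ _ _ _ _ _ _ Hhead Htail).
    rewrite <- (RInt_Chasles (fun s => s * p s) t (t + c) (t + c + sumR r))
      by (apply Hsub; auto; lra).
    rewrite (RInt_Chasles_sub p 0 t (t + c)) by (lra || (apply Hsub; auto; lra)).
    change (plus ?x ?y) with (x + y). ring.
Qed.

End CompletionIntegral.

Lemma ET_eq_weighted_cdf (a : nat -> R) (lam : R -> R) (l : list nat) :
  (forall t, 0 <= t -> 0 <= lam t) -> (forall t, 0 <= t -> ex_RInt lam 0 t) ->
  (forall c, In c (lens a l) -> 0 <= c) ->
  ET a lam l = RInt (fun s => s * dens lam s) 0 (sumR (lens a l))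
               + sumR (lens a l) * exp (- Lam lam (sumR (lens a l)))
               + weighted_cdf (dens lam) (lens a l) 0.
Proof.
  intros Hlam Hint Hpos.
  set (An := sumR (lens a l)).
  assert (HAn : 0 <= An) by (apply sumR_ge0, Hpos).
  assert (H := is_RInt_completion (dens lam) An (ex_RInt_dens lam Hlam Hint An HAn)
                 (ex_RInt_mul_id_dens lam Hlam Hint An HAn) (lens a l) 0 Hpos (Rle_refl 0)
                 ltac:(unfold An; lra)).
  rewrite Rplus_0_l, RInt_point in H. fold An in H.
  unfold ET. cbv zeta. fold An.
  rewrite (is_RInt_unique _ _ _ _ H). unfold zero; simpl. ring.
Qed.

Lemma ET_sub_perm (a : nat -> R) (lam : R -> R) (l1 l2 : list nat) :
  (forall t, 0 <= t -> 0 <= lam t) -> (forall t, 0 <= t -> ex_RInt lam 0 t) ->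
  (forall c, In c (lens a l1) -> 0 <= c) -> Permutation l1 l2 ->
  ET a lam l1 - ET a lam l2
  = weighted_cdf (dens lam) (lens a l1) 0 - weighted_cdf (dens lam) (lens a l2) 0.
Proof.
  intros Hlam Hint Hpos Hperm.
  assert (Hlens : Permutation (lens a l1) (lens a l2)) by (apply Permutation_map, Hperm).
  assert (Hpos2 : forall c, In c (lens a l2) -> 0 <= c).
  { intros c Hc. apply Hpos, (Permutation_in _ (Permutation_sym Hlens) Hc). }
  rewrite (ET_eq_weighted_cdf a lam l1), (ET_eq_weighted_cdf a lam l2), (sumR_perm _ _ Hlens)
    by assumption.
  ring.
Qed.

Definition strict_decr_on (p : R -> R) (u v : R) : Prop :=
  forall x y, u <= x -> x < y -> y <= v -> p y < p x.

Definition strict_incr_on (p : R -> R) (u v : R) : Prop :=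
  forall x y, u <= x -> x < y -> y <= v -> p x < p y.

Lemma strict_decr_RInt_gt (p : R -> R) u v :
  u < v -> ex_RInt p u v -> strict_decr_on p u v -> (v - u) * p v < RInt p u v.
Proof.
  intros Huv Hp Hdec.
  set (m := (u + v) / 2).
  assert (Hm : u < m < v) by (unfold m; lra).
  assert (Hum : (m - u) * p m <= RInt p u m).
  { apply RInt_ge_const; [lra|apply (ex_RInt_subinterval p u v); lra || assumption|].
    intros x Hx. left. apply Hdec; lra. }
  assert (Hmv : (v - m) * p v <= RInt p m v).
  { apply RInt_ge_const; [lra|apply (ex_RInt_subinterval p u v); lra || assumption|].
    intros x Hx. left. apply Hdec; lra. }
  assert (Hpm : (m - u) * p v < (m - u) * p m) by (apply Rmult_lt_compat_l; [lra|apply Hdec; lra]).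
  assert (Hsplit := RInt_Chasles p u m v
    (ex_RInt_subinterval p u v u m ltac:(lra) ltac:(lra) ltac:(lra) Hp)
    (ex_RInt_subinterval p u v m v ltac:(lra) ltac:(lra) ltac:(lra) Hp)).
  change (RInt p u m + RInt p m v = RInt p u v) in Hsplit.
  lra.
Qed.

Lemma cdf_exchange_decr (p : R -> R) (Tot : R) :
  ex_RInt p 0 Tot -> strict_decr_on p 0 Tot ->
  forall B x y, 0 <= B -> 0 < x -> 0 < y -> B + x + y <= Tot -> y < x ->
  y * RInt p 0 (B + y) + x * RInt p 0 (B + x + y)
  < x * RInt p 0 (B + x) + y * RInt p 0 (B + x + y).
Proof.
  intros Hp Hdec B x y HB Hx Hy HTot Hyx.
  set (w := B + x + y). set (u := B + y). set (v := B + x).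
  assert (Hsub : forall c d, 0 <= c -> c <= d -> d <= Tot -> ex_RInt p c d).
  { intros c d Hc Hcd Hd. exact (ex_RInt_subinterval p 0 Tot c d Hc Hcd Hd Hp). }
  assert (Huv : RInt p 0 v - RInt p 0 u = RInt p u v).
  { symmetry. apply RInt_Chasles_sub; unfold u, v; [lra|lra|apply Hsub; lra]. }
  assert (Hvw : RInt p 0 w - RInt p 0 v = RInt p v w).
  { symmetry. apply RInt_Chasles_sub; unfold v, w; [lra|lra|apply Hsub; lra]. }
  assert (H1 : (x - y) * p v < RInt p u v).
  { replace (x - y) with (v - u) by (unfold u, v; ring).
    apply strict_decr_RInt_gt; unfold u, v in *; [lra|apply Hsub; lra|].
    intros s s' Hs Hss' Hs'. apply Hdec; lra. }
  assert (H2 : RInt p v w <= y * p v).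
  { replace y with (w - v) by (unfold v, w; ring).
    apply RInt_le_const; unfold v, w in *; [lra|apply Hsub; lra|].
    intros s Hs. left. apply Hdec; lra. }
  assert (y * ((x - y) * p v) < y * RInt p u v) by (apply Rmult_lt_compat_l; lra).
  assert ((x - y) * RInt p v w <= (x - y) * (y * p v)) by (apply Rmult_le_compat_l; lra).
  apply Rlt_0_minus.
  replace (x * RInt p 0 v + y * RInt p 0 w - (y * RInt p 0 u + x * RInt p 0 w))
    with (y * (RInt p 0 v - RInt p 0 u) - (x - y) * (RInt p 0 w - RInt p 0 v)) by ring.
  rewrite Huv, Hvw. lra.
Qed.

Lemma cdf_exchange_incr (p : R -> R) (Tot : R) :
  ex_RInt p 0 Tot -> strict_incr_on p 0 Tot ->
  forall B x y, 0 <= B -> 0 < x -> 0 < y -> B + x + y <= Tot -> y > x ->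
  y * RInt p 0 (B + y) + x * RInt p 0 (B + x + y)
  < x * RInt p 0 (B + x) + y * RInt p 0 (B + x + y).
Proof.
  intros Hp Hinc B x y HB Hx Hy HTot Hxy.
  assert (Hopp : forall t, 0 <= t <= Tot -> RInt (fun s => - p s) 0 t = - RInt p 0 t).
  { intros t Ht. apply (RInt_opp (V := R_CompleteNormedModule)).
    apply (ex_RInt_subinterval p 0 Tot); lra || assumption. }
  assert (H := cdf_exchange_decr (fun s => - p s) Tot (ex_RInt_opp p 0 Tot Hp)
                 ltac:(intros s s' Hs Hss' Hs'; apply Ropp_lt_contravar, Hinc; assumption)
                 B y x HB Hy Hx ltac:(lra) Hxy).
  replace (B + y + x) with (B + x + y) in H by ring.
  rewrite !Hopp in H by lra.
  lra.
Qed.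

Section SortedMinimum.

Variables (p : R -> R) (Tot : R) (ord : R -> R -> Prop).
Hypothesis swap_lt : forall B x y, 0 <= B -> 0 < x -> 0 < y -> B + x + y <= Tot -> ord y x ->
  y * RInt p 0 (B + y) + x * RInt p 0 (B + x + y)
  < x * RInt p 0 (B + x) + y * RInt p 0 (B + x + y).

Lemma weighted_cdf_sorted_min (cs ss : list R) (B : R) :
  Permutation cs ss -> StronglySorted ord ss ->
  (forall c, In c cs -> 0 < c) -> 0 <= B -> B + sumR cs <= Tot ->
  cs = ss \/ weighted_cdf p ss B < weighted_cdf p cs B.
Proof.
  remember (length cs) as n eqn:Hlen. revert cs ss B Hlen.
  induction n as [|n IH]; intros cs ss B Hlen Hperm Hsort Hpos HB Htot.
  { destruct cs; [|discriminate]. left. symmetry. apply Permutation_nil, Hperm. }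
  destruct cs as [|x r]; [discriminate|].
  destruct ss as [|y ss']; [apply Permutation_sym, Permutation_nil in Hperm; discriminate|].
  simpl in Hlen, Htot. injection Hlen as Hlen.
  assert (Hx : 0 < x) by (apply Hpos; left; reflexivity).
  assert (Hr : forall c, In c r -> 0 < c) by (intros; apply Hpos; right; assumption).
  assert (Sr : 0 <= sumR r) by (apply sumR_ge0; intros; left; auto).
  apply StronglySorted_inv in Hsort as [Hsort' Hhead].
  destruct (Req_dec x y) as [<-|Hxy].
  - apply Permutation_cons_inv in Hperm.
    destruct (IH r ss' (B + x) Hlen Hperm Hsort' Hr ltac:(lra) ltac:(lra)) as [<-|Hlt].
    + left. reflexivity.
    + right. simpl. lra.
  - destruct (Permutation_cons_neq x y r ss' Hxy Hperm) as [l1 [l2 [-> Hrt]]].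
    set (t := l1 ++ l2) in Hrt.
    assert (Hyx : ord y x) by (rewrite Forall_forall in Hhead; apply Hhead, in_elt).
    assert (Hy : 0 < y) by (apply Hr, (Permutation_in _ (Permutation_sym Hrt)); left; reflexivity).
    assert (Ht : forall c, In c t -> 0 < c).
    { intros c Hc. apply Hr, (Permutation_in _ (Permutation_sym Hrt)). right. exact Hc. }
    assert (Srt : sumR r = y + sumR t) by exact (sumR_perm _ _ Hrt).
    assert (St : 0 <= sumR t) by (apply sumR_ge0; intros; left; auto).
    assert (Hsort_t : StronglySorted ord (y :: t)).
    { apply (StronglySorted_remove ord (y :: l1) l2 x). constructor; assumption. }
    assert (H1 : weighted_cdf p (y :: t) (B + x) <= weighted_cdf p r (B + x)).
    { destruct (IH r (y :: t) (B + x) Hlen Hrt Hsort_t Hr ltac:(lra) ltac:(lra))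
        as [<-|Hlt]; lra. }
    assert (H2 : weighted_cdf p (l1 ++ x :: l2) (B + y) <= weighted_cdf p (x :: t) (B + y)).
    { assert (Hlen' : n = length (x :: t)).
      { rewrite (Permutation_length Hrt) in Hlen. exact Hlen. }
      assert (Hxt : forall c, In c (x :: t) -> 0 < c) by (intros c [<-|Hc]; auto).
      destruct (IH (x :: t) (l1 ++ x :: l2) (B + y) Hlen' (Permutation_middle l1 l2 x) Hsort'
                 Hxt ltac:(lra) ltac:(simpl; lra)) as [<-|Hlt]; lra. }
    assert (Hswap := swap_lt B x y HB Hx Hy ltac:(lra) Hyx).
    right. simpl in H1, H2 |- *.
    replace (B + y + x) with (B + x + y) in H2 by ring.
    lra.
Qed.

End SortedMinimum.

Section TaskLengths.

Variables (n : nat) (a : nat -> R).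
Hypothesis a_pos : forall i, (i < n)%nat -> 0 < a i.
Hypothesis a_succ : forall i, (S i < n)%nat -> a i < a (S i).

Lemma a_lt (i j : nat) : (i < j < n)%nat -> a i < a j.
Proof.
  intros [Hij Hjn]. induction Hij as [|j Hij IH].
  - apply a_succ, Hjn.
  - apply Rlt_trans with (a j); [apply IH; lia|apply a_succ, Hjn].
Qed.

Lemma lens_pos (l : list nat) : Permutation l (seq 0 n) -> forall c, In c (lens a l) -> 0 < c.
Proof.
  intros Hl c Hc. apply in_map_iff in Hc as [i [<- Hi]].
  apply a_pos. apply (Permutation_in _ Hl), in_seq in Hi. lia.
Qed.

Lemma lens_inj (l1 l2 : list nat) :
  Permutation l1 (seq 0 n) -> Permutation l2 (seq 0 n) -> lens a l1 = lens a l2 -> l1 = l2.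
Proof.
  intros H1 H2. apply map_eq_inj_in. intros i j Hi Hj Eij.
  apply (Permutation_in _ H1), in_seq in Hi. apply (Permutation_in _ H2), in_seq in Hj.
  destruct (Nat.lt_trichotomy i j) as [Hlt|[Heq|Hlt]]; [|exact Heq|];
    [pose proof (a_lt i j ltac:(lia))|pose proof (a_lt j i ltac:(lia))]; lra.
Qed.

Lemma lens_seq_sorted : StronglySorted Rlt (lens a (seq 0 n)).
Proof.
  assert (H : forall k m, (k + m <= n)%nat -> StronglySorted Rlt (lens a (seq k m))).
  { intros k m. revert k. induction m as [|m IH]; intros k Hkm; simpl; constructor.
    - apply IH. lia.
    - apply Forall_forall. intros z Hz. apply in_map_iff in Hz as [j [<- Hj]].
      apply in_seq in Hj. apply a_lt. lia. }
  apply H. lia.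
Qed.

Lemma lens_rev_seq_sorted : StronglySorted Rgt (lens a (rev (seq 0 n))).
Proof.
  assert (H : forall m, (m <= n)%nat -> StronglySorted Rgt (lens a (rev (seq 0 m)))).
  { induction m as [|m IH]; intros Hm; [constructor|].
    rewrite seq_S, rev_app_distr. simpl. constructor.
    - apply IH. lia.
    - apply Forall_forall. intros z Hz. apply in_map_iff in Hz as [j [<- Hj]].
      apply in_rev, in_seq in Hj. apply a_lt. lia. }
  apply H. lia.
Qed.

End TaskLengths.

Lemma ET_lt_of_sorted (a : nat -> R) (lam : R -> R) (Tot : R) (ord : R -> R -> Prop)
    (l ls : list nat) :
  (forall t, 0 <= t -> 0 <= lam t) -> (forall t, 0 <= t -> ex_RInt lam 0 t) ->
  (forall B x y, 0 <= B -> 0 < x -> 0 < y -> B + x + y <= Tot -> ord y x ->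
     y * RInt (dens lam) 0 (B + y) + x * RInt (dens lam) 0 (B + x + y)
     < x * RInt (dens lam) 0 (B + x) + y * RInt (dens lam) 0 (B + x + y)) ->
  Permutation l ls -> StronglySorted ord (lens a ls) ->
  (forall c, In c (lens a l) -> 0 < c) -> sumR (lens a l) <= Tot -> lens a l <> lens a ls ->
  ET a lam ls < ET a lam l.
Proof.
  intros Hlam Hint Hswap Hperm Hsort Hpos HTot Hne.
  assert (Hdiff := ET_sub_perm a lam l ls Hlam Hint ltac:(intros c Hc; left; auto) Hperm).
  destruct (weighted_cdf_sorted_min (dens lam) Tot ord Hswap (lens a l) (lens a ls) 0
              (Permutation_map a Hperm) Hsort Hpos (Rle_refl 0) ltac:(lra)) as [E|Hlt].
  - contradiction.
  - lra.
Qed.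

Theorem theorem4 (n : nat) (a : nat -> R) (lam : R -> R)
  (ha_pos : forall i : nat, (i < n)%nat -> 0 < a i)
  (ha_incr : forall i : nat, (S i < n)%nat -> a i < a (S i))
  (hlam_nonneg : forall t : R, 0 <= t -> 0 <= lam t)
  (hlam_int : forall t : R, 0 <= t -> ex_RInt lam 0 t) :
  let id_ord := seq 0 n in
  let An := sumR (lens a id_ord) in
  (forall l : list nat, Permutation l id_ord ->
     ET a lam id_ord - ET a lam l =
     sumR (map (fun k =>
       a (nth k id_ord 0%nat) * RInt (dens lam) 0 (Apref a id_ord (S k))
       - a (nth k l 0%nat) * RInt (dens lam) 0 (Apref a l (S k))) id_ord))
  /\
  ((forall x y : R, 0 <= x -> x < y -> y <= An -> dens lam y < dens lam x) ->
   forall l : list nat, Permutation l id_ord -> l <> id_ord ->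
     ET a lam id_ord < ET a lam l)
  /\
  ((forall x y : R, 0 <= x -> x < y -> y <= An -> dens lam x < dens lam y) ->
   forall l : list nat, Permutation l id_ord -> l <> rev id_ord ->
     ET a lam (rev id_ord) < ET a lam l).
Proof.
  intros id_ord An.
  assert (Hpos := lens_pos n a ha_pos).
  assert (Hnonneg : forall c, In c (lens a id_ord) -> 0 <= c).
  { intros c Hc. left. exact (Hpos _ (Permutation_refl _) c Hc). }
  assert (Hp := ex_RInt_dens lam hlam_nonneg hlam_int An (sumR_ge0 _ Hnonneg)).
  assert (Hsum : forall l, Permutation l id_ord -> sumR (lens a l) <= An).
  { intros l Hl. right. apply sumR_perm, Permutation_map, Hl. }
  assert (Hlens_neq : forall l l', Permutation l id_ord -> Permutation l' id_ord ->
                        l <> l' -> lens a l <> lens a l').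
  { intros l l' Hl Hl' Hll' E. exact (Hll' (lens_inj n a ha_incr l l' Hl Hl' E)). }
  split; [|split].
  - intros l Hl.
    rewrite (ET_sub_perm a lam id_ord l hlam_nonneg hlam_int Hnonneg (Permutation_sym Hl)),
      !weighted_cdf_lens, (Permutation_length Hl), (length_seq n 0 : length id_ord = n).
    apply sumR_map_minus.
  - intros Hdec l Hl Hl'.
    apply (ET_lt_of_sorted a lam An Rlt l id_ord hlam_nonneg hlam_int
             (cdf_exchange_decr (dens lam) An Hp Hdec) Hl (lens_seq_sorted n a ha_incr)
             (Hpos l Hl) (Hsum l Hl)).
    apply Hlens_neq; [exact Hl|apply Permutation_refl|exact Hl'].
  - intros Hinc l Hl Hl'.
    assert (Hrev : Permutation (rev id_ord) id_ord) by apply Permutation_sym, Permutation_rev.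
    apply (ET_lt_of_sorted a lam An Rgt l (rev id_ord) hlam_nonneg hlam_int
             (cdf_exchange_incr (dens lam) An Hp Hinc)
             (Permutation_trans Hl (Permutation_sym Hrev)) (lens_rev_seq_sorted n a ha_incr)
             (Hpos l Hl) (Hsum l Hl)).
    apply Hlens_neq; [exact Hl|exact Hrev|exact Hl'].
Qed.
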